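(* Let $k\geq2$, let $X$ be a countably based $T_0$-space, let $\theta\geq2$ be a countable ordinal and let $T$ be a countable $k$-tree. Then $\mathbf{\Sigma}^0_\theta(X,T)$ has a principal $\mathbf{\Sigma}^0_\theta(T)$-total representation. If moreover $X$ is zero-dimensional, then $\mathbf{\Sigma}^0_1(X,T)$ has a principal $\mathbf{\Sigma}^0_1(T)$-total representation.
   Context: $\mathcal{N}=\omega^\omega$ is the Baire space. For a space $X$: $\mathbf{\Sigma}^0_1(X)$ the open sets; $\mathbf{\Sigma}^0_2(X)$ the countable unions of sets $U\setminus V$ with $U,V$ open; for $2<\alpha<\omega_1$, $\mathbf{\Sigma}^0_\alpha(X)$ the countable unions of complements of sets in $\bigcup_{\beta<\alpha}\mathbf{\Sigma}^0_\beta(X)$ (with $\mathbf{\Sigma}^0_0(X)=\{\emptyset\}$). A $k$-partition of $X$ is a function $A:X\to k=\{0,\dots,k-1\}$. A countable $k$-forest is a countable poset $(P;\leq)$ without infinite chains in which every upper cone $\{y\mid x\leq y\}$ is a chain, with a labeling $c:P\to k$; a $k$-tree is a $k$-forest with a greatest element. For a $k$-forest $F$, $\mathbf{\Sigma}^0_\theta(X,F)$ is the set of $k$-partitions $A:X\to k$ for which there exist $B_p\in\mathbf{\Sigma}^0_\theta(X)$ ($p\in F$) with $\bigcup_pB_p=X$ and $A^{-1}(i)=\bigcup\{B_p\setminus\bigcup_{q<p}B_q\mid c(p)=i\}$ for each $i<k$; $\mathbf{\Sigma}^0_\theta(T)$ denotes the assignment $X\mapsto\mathbf{\Sigma}^0_\theta(X,T)$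 (over all spaces $X$). A function $\nu:\mathcal{N}\to\mathbf{\Sigma}^0_\theta(X,T)$ is a $\mathbf{\Sigma}^0_\theta(T)$-total representation if the $k$-partition $(a,x)\mapsto\nu(a)(x)$ of $\mathcal{N}\times X$ belongs to $\mathbf{\Sigma}^0_\theta(\mathcal{N}\times X,T)$; it is principal if for every $\mathbf{\Sigma}^0_\theta(T)$-total representation $\mu:\mathcal{N}\to\mathbf{\Sigma}^0_\theta(X,T)$ there is a continuous $g:\mathcal{N}\to\mathcal{N}$ with $\mu=\nu\circ g$. *)

From HB Require Import structures.
From mathcomp Require Import all_boot all_order all_algebra.
From mathcomp Require Import all_classical all_reals all_analysis.
Set Implicit Arguments.
Unset Strict Implicit.
Unset Printing Implicit Defensive.
Local Open Scope classical_set_scope.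

(* Every Brouwer tree denotes a countable ordinal (bzero = 0, bsucc a = a+1,
   blim f = sup_n f n) and every countable ordinal is so denoted. *)
Inductive bord : Type :=
| bzero : bord
| bsucc : bord -> bord
| blim : (nat -> bord) -> bord.

(* The ordinal order on Brouwer trees (Kraus--Nordvall Forsberg--Xu):
   ble a b  iff  |a| <= |b|. *)
Inductive ble : bord -> bord -> Prop :=
| ble_zero b : ble bzero b
| ble_trans a b c : ble a b -> ble b c -> ble a c
| ble_succ a b : ble a b -> ble (bsucc a) (bsucc b)
| ble_cocone a f n : ble a (f n) -> ble a (blim f)
| ble_limiting f b : (forall n, ble (f n) b) -> ble (blim f) b.

Definition blt (a b : bord) : Prop := ble (bsucc a) b.
Definition beq (a b : bord) : Prop := ble a b /\ ble b a.

Definition bone : bord := bsucc bzero.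
Definition btwo : bord := bsucc bone.

Inductive Sigma0 (X : topologicalType) : bord -> set X -> Prop :=
| Sigma0_zero a : beq a bzero -> Sigma0 a set0
| Sigma0_one a (A : set X) : beq a bone -> open A -> Sigma0 a A
| Sigma0_two a (A : set X) (U V : nat -> set X) :
    beq a btwo -> (forall n, open (U n)) -> (forall n, open (V n)) ->
    A = \bigcup_n (U n `\` V n) -> Sigma0 a A
| Sigma0_high a (A : set X) (b : nat -> bord) (B : nat -> set X) :
    blt btwo a -> (forall n, blt (b n) a) -> (forall n, Sigma0 (b n) (B n)) ->
    A = \bigcup_n (~` B n) -> Sigma0 a A.

Record kforest (k : nat) := KForest {
  fnode : Type;
  fle : fnode -> fnode -> Prop;
  flabel : fnode -> 'I_k;
  fnode_countable : exists f : fnode -> nat, injective f;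
  fle_refl : forall x, fle x x;
  fle_antisym : forall x y, fle x y -> fle y x -> x = y;
  fle_trans : forall x y z, fle x y -> fle y z -> fle x z;
  fle_chains_finite : forall C : set fnode,
      (forall x y, C x -> C y -> fle x y \/ fle y x) -> finite_set C;
  fle_cones_chains : forall x y z, fle x y -> fle x z -> fle y z \/ fle z y
}.

Definition flt k (F : kforest k) (p q : fnode F) : Prop := fle p q /\ p <> q.

Definition is_ktree k (F : kforest k) : Prop :=
  exists r : fnode F, forall x, fle x r.

Definition SigmaPart k (X : topologicalType) (theta : bord) (F : kforest k)
    (A : X -> 'I_k) : Prop :=
  exists B : fnode F -> set X,
    [/\ forall p, Sigma0 theta (B p),
        \bigcup_p B p = [set: X] &
        forall i : 'I_k, A @^-1` [set i] =
          \bigcup_(p in [set p | flabel p = i])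
             (B p `\` \bigcup_(q in [set q | flt q p]) B q)].

Definition baire : topologicalType := {ptws nat -> nat}.

Definition total_rep k (X : topologicalType) (theta : bord) (F : kforest k)
    (nu : baire -> X -> 'I_k) : Prop :=
  (forall a, SigmaPart theta F (nu a)) /\
  SigmaPart (X := (baire * X)%type) theta F (fun z => nu z.1 z.2).

Definition principal_rep k (X : topologicalType) (theta : bord) (F : kforest k)
    (nu : baire -> X -> 'I_k) : Prop :=
  total_rep theta F nu /\
  forall mu : baire -> X -> 'I_k, total_rep theta F mu ->
    exists g : baire -> baire, continuous g /\ mu = nu \o g.

Definition zero_dim (X : topologicalType) : Prop :=
  exists B : set (set X), basis B /\ B `<=` clopen.

From mathcomp Require Import all_boot all_order all_algebra.
From mathcomp Require Import all_classical all_reals all_analysis.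
From Stdlib Require Cantor.
Local Open Scope classical_set_scope.
Set Implicit Arguments.
Unset Strict Implicit.

(* For theta >= 2 the class Sigma^0_theta(N x X) has a universal set: a family
   U : N -> set X with (a, x) |-> U a x in the class and such that every set of
   the class is {(a, x) | U (g a) x} for a continuous g.  It is built by
   recursion on theta from a countable base of X, using Cantor pairing to code
   sequences of Baire points by one Baire point.
   Give each node p of the tree its own coordinate copy F_p of U.  Since
   Sigma^0_theta has the reduction property (for theta = 1 this needs a
   zero-dimensional X, where open sets are countable unions of clopen sets),
   the family (F_p) can be normalised, level by level down the tree, into sets
   (G_p) increasing along the tree order such that the nodes p with z in G_p
   form a chain; labelling z by the label of its least such node gives a
   Sigma^0_theta(T)-total representation.  Its least node is F-minimal at z,
   so if C_p are the Sigma^0_theta sets defining another total representation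
   and g_p is a code of C_p, plugging the g_p into the coordinates of the
   copies F_p recovers that representation by a continuous reparametrisation. *)

(** * Brouwer ordinals *)

(* A structurally recursive presentation of [ble]: for [bsucc a] the inner
   fixpoint computes the strict order [a < b]. *)
Fixpoint bord_le (a : bord) : bord -> Prop :=
  match a with
  | bzero => fun _ => True
  | bsucc a0 => fix lt_a0 b := match b with
                  | bzero => False
                  | bsucc b0 => bord_le a0 b0
                  | blim g => exists n, lt_a0 (g n) end
  | blim f => fun b => forall n, bord_le (f n) b
  end.

Definition bord_lt a b := bord_le (bsucc a) b.

Lemma bord_le_cocone a f n : bord_le a (f n) -> bord_le a (blim f).
Proof.
elim: a => [//|a0 _|h IH] H.
- by exists n.
- by move=> m; apply: IH; apply: H.
Qed.

Lemma bord_le_refl a : bord_le a a.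
Proof.
elim: a => [//|a0 IH|f IH] /=; first exact: IH.
by move=> n; apply: (@bord_le_cocone _ _ n); apply: IH.
Qed.

Lemma bord_le_trans a b c : bord_le a b -> bord_le b c -> bord_le a c.
Proof.
elim: a b c => [//|a0 IHa|f IH] b c; last first.
  by move=> H1 H2 n; apply: (IH n b) => //; apply: H1.
have le_lt_trans x y d : (forall b c, bord_le x b -> bord_le b c -> bord_le x c) ->
    bord_le x y -> bord_lt y d -> bord_lt x d.
  move=> Tx xy; elim: d => [//|d0 _|h IHh] /=; first exact: Tx xy.
  by case=> n Hn; exists n; apply: IHh.
elim: b c => [//|b0 _|g IHg] c.
- exact: (le_lt_trans _ _ _ IHa).
- by case=> n Hn H2; apply: (IHg n) => //; exact: H2.
Qed.

Lemma bord_leP a b : ble a b <-> bord_le a b.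
Proof.
split.
- elim => {a b} [//|a b c _ H1 _ H2|//|a f n _ H|//].
  + exact: bord_le_trans H1 H2.
  + exact: bord_le_cocone H.
- elim: a b => [|a0 IH|f IH] b.
  + by move=> _; constructor.
  + elim: b => [//|b0 _|g IHg] /=.
    * by move=> H; apply: ble_succ; apply: IH.
    * by case=> n Hn; apply: (@ble_cocone _ _ n); apply: IHg.
  + by move=> H; apply: ble_limiting => n; apply: IH.
Qed.

Lemma bord_ltP a b : blt a b <-> bord_lt a b.
Proof. exact: bord_leP. Qed.

Lemma beqP a b : beq a b <-> bord_le a b /\ bord_le b a.
Proof. by rewrite /beq !bord_leP. Qed.

Lemma bord_le_succ a : bord_le a (bsucc a).
Proof.
elim: a => [//|a0 IH|f IH]; first exact: IH.
move=> n; apply: bord_le_trans (IH n) _.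
exact: (@bord_le_cocone _ f n) (bord_le_refl _).
Qed.

Lemma bord_ltW a b : bord_lt a b -> bord_le a b.
Proof. exact: bord_le_trans (bord_le_succ a). Qed.

Lemma bord_lt_le_trans a b c : bord_lt a b -> bord_le b c -> bord_lt a c.
Proof. exact: bord_le_trans. Qed.

Lemma bord_leVlt a b : bord_le b a \/ bord_lt a b.
Proof.
(* Both directions are proved together: the successor case of one uses the
   other. *)
suff H : forall y x,
  (bord_le y x \/ bord_lt x y) /\ (bord_le x y \/ bord_lt y x) by exact: (H b a).1.
have lim_case f c : (forall n, bord_le (f n) c \/ bord_lt c (f n)) ->
    bord_le (blim f) c \/ bord_lt c (blim f).
  move=> IH; have [H|/existsNP [n Hn]] := pselect (forall n, bord_le (f n) c).
    by left.
  by right; exists n; case: (IH n).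
move=> {a b}; elim=> [|b0 IHb|g IHg] a.
- split; first by left.
  by elim: a => [|a0 _|f IHf]; [left|right|apply: lim_case].
- split; first by have [_ [H|H]] := IHb a; [right|left].
  elim: a => [|a0 _|f IHf]; first by left.
  + by have [_ [H|H]] := IHb a0; [left|right].
  + exact: lim_case.
- split; first by apply: lim_case => n; case: (IHg n a).
  elim: a => [|a0 _|f IHf]; first by left.
  + have [H|/existsNP [n Hn]] := pselect (forall n, bord_le (g n) a0).
      by right.
    left; exists n; have [[H|H] _] := IHg n a0 => //; case: Hn.
  + exact: lim_case.
Qed.

Lemma bord_lt_wf : well_founded bord_lt.
Proof.
suff H t b : bord_lt b t -> Acc bord_lt b.
  by move=> b; apply: (H (bsucc b)); apply: bord_le_refl.
elim: t b => [//|t IH|f IH] b.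
- by move=> bt; constructor => c cb; apply: IH; exact: bord_le_trans cb bt.
- by case=> n Hn; apply: (IH n).
Qed.

Lemma bord_lt_irr a : ~ bord_lt a a.
Proof. by have := bord_lt_wf a; elim=> c _ IH Hc; exact: (IH c Hc Hc). Qed.

Lemma bord_cases a :
  [\/ bord_le a bzero, bord_le a bone /\ bord_le bone a,
      bord_le a btwo /\ bord_le btwo a | bord_lt btwo a].
Proof.
have [H0|H0] := bord_leVlt bzero a; first exact: Or41.
have [H1|H1] := bord_leVlt bone a; first exact: Or42.
have [H2|H2] := bord_leVlt btwo a; first exact: Or43.
exact: Or44.
Qed.

(** * Closure properties of the classes Sigma^0_a *)

Lemma bigcup_pair T (F : nat -> nat -> set T) :
  \bigcup_n \bigcup_m F n m = \bigcup_k F (Cantor.of_nat k).1 (Cantor.of_nat k).2.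
Proof.
apply/seteqP; split => x /=.
- case=> n _ [m _ H]; exists (Cantor.to_nat (n, m)) => //.
  by rewrite Cantor.cancel_of_to.
- by case=> k _ H; exists (Cantor.of_nat k).1 => //; exists (Cantor.of_nat k).2.
Qed.

Lemma bigcup_cst T (A : set T) : \bigcup_(n : nat) A = A.
Proof. by apply: bigcup_const; exists 0%N. Qed.

Section SigmaClasses.
Context {Y : topologicalType}.
Implicit Types A B : set Y.

Lemma Sigma0_beq a b A : Sigma0 a A -> bord_le a b -> bord_le b a -> Sigma0 b A.
Proof.
case.
- move=> c /beqP [c0 _] ab ba.
  by apply: Sigma0_zero; apply/beqP; split=> //; exact: bord_le_trans ba c0.
- move=> c A0 /beqP [c1 c1'] oA ab ba; apply: Sigma0_one => //.
  by apply/beqP; split; [exact: bord_le_trans ba c1|exact: bord_le_trans c1' ab].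
- move=> c A0 U V /beqP [c2 c2'] oU oV -> ab ba; apply: (Sigma0_two _ oU oV) => //.
  by apply/beqP; split; [exact: bord_le_trans ba c2|exact: bord_le_trans c2' ab].
- move=> c A0 d B /bord_ltP c3 dc SB -> ab ba; apply: Sigma0_high SB _ => //.
  + by apply/bord_ltP; exact: bord_lt_le_trans c3 ab.
  + by move=> n; apply/bord_ltP; apply: bord_lt_le_trans ab; exact/bord_ltP.
Qed.

Lemma Sigma0_le0 a A : Sigma0 a A -> bord_le a bzero -> A = set0.
Proof.
case=> //.
- by move=> c A0 /beqP [_ h] _ /(bord_le_trans h).
- by move=> c A0 U V /beqP [_ h] _ _ _ /(bord_le_trans h).
- by move=> c A0 d B /bord_ltP h _ _ _ /(bord_lt_le_trans h).
Qed.

Lemma Sigma0_eq1 a A : Sigma0 a A -> bord_le a bone -> bord_le bone a -> open A.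
Proof.
case=> //.
- by move=> *; exact: open0.
- by move=> c A0 U V /beqP [_ h] _ _ _ /(bord_le_trans h).
- by move=> c A0 d B /bord_ltP h _ _ _ /(bord_lt_le_trans h).
Qed.

Lemma Sigma0_eq2 a A : Sigma0 a A -> bord_le a btwo -> bord_le btwo a ->
  exists U V : nat -> set Y, [/\ forall n, open (U n), forall n, open (V n) &
     A = \bigcup_n (U n `\` V n)].
Proof.
case.
- by move=> c /beqP [h _] _ /bord_le_trans /(_ h).
- by move=> c A0 /beqP [h _] _ _ /bord_le_trans /(_ h).
- by move=> c A0 U V _ oU oV -> _ _; exists U, V.
- move=> c A0 d B /bord_ltP h _ _ _ h' _.
  by case: (bord_lt_irr (bord_lt_le_trans h h')).
Qed.

Lemma Sigma0_gt2 a A : Sigma0 a A -> bord_lt btwo a ->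
  exists (d : nat -> bord) (B : nat -> set Y),
   [/\ forall n, bord_lt (d n) a, forall n, Sigma0 (d n) (B n) &
       A = \bigcup_n ~` B n].
Proof.
case.
- by move=> c /beqP [h _] /bord_ltW /bord_le_trans /(_ h).
- by move=> c A0 /beqP [h _] _ /bord_ltW /bord_le_trans /(_ h).
- move=> c A0 U V /beqP [h _] _ _ _ h'.
  by case: (bord_lt_irr (bord_lt_le_trans h' h)).
- by move=> c A0 d B _ dc SB -> _; exists d, B; split=> // n; exact/bord_ltP.
Qed.

Lemma Sigma0_oneE A : Sigma0 bone A <-> open A.
Proof.
split; first by move/Sigma0_eq1; apply; exact: bord_le_refl.
by move=> oA; apply: Sigma0_one => //; apply/beqP; split; exact: bord_le_refl.
Qed.

Lemma Sigma0_two_of a (U V : nat -> set Y) : bord_le a btwo -> bord_le btwo a ->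
  (forall n, open (U n)) -> (forall n, open (V n)) ->
  Sigma0 a (\bigcup_n (U n `\` V n)).
Proof. by move=> h h' oU oV; apply: Sigma0_two oU oV _ => //; exact/beqP. Qed.

Lemma Sigma0_high_of a (d : nat -> bord) (B : nat -> set Y) : bord_lt btwo a ->
  (forall n, bord_lt (d n) a) -> (forall n, Sigma0 (d n) (B n)) ->
  Sigma0 a (\bigcup_n ~` B n).
Proof.
move=> h dn SB; apply: Sigma0_high SB _ => //; first exact/bord_ltP.
by move=> n; exact/bord_ltP.
Qed.

Lemma open_Sigma0_2 A : open A -> Sigma0 btwo A.
Proof.
move=> oA; rewrite -(setD0 A) -(bigcup_cst (A `\` set0)).
by apply: Sigma0_two_of; try exact: bord_le_refl; move=> _; [exact: oA|exact: open0].
Qed.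

Lemma closed_Sigma0_2 A : open A -> Sigma0 btwo (~` A).
Proof.
move=> oA; rewrite -setTD -(bigcup_cst (setT `\` A)).
by apply: Sigma0_two_of; try exact: bord_le_refl; move=> _; [exact: openT|exact: oA].
Qed.

Lemma Sigma0_set0 a : Sigma0 a (@set0 Y).
Proof.
case: (bord_cases a) => [h|[h h']|[h h']|h].
- by apply: Sigma0_zero; apply/beqP.
- by apply: Sigma0_one; [apply/beqP|exact: open0].
- have -> : @set0 Y = \bigcup_(n : nat) (set0 `\` set0) by rewrite bigcup_cst setD0.
  by apply: Sigma0_two_of => // _; exact: open0.
- have -> : @set0 Y = \bigcup_(n : nat) ~` setT by rewrite bigcup_cst setCT.
  apply: (@Sigma0_high_of _ (fun=> btwo)) => // _.
  exact: open_Sigma0_2 openT.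
Qed.

Lemma Sigma0_bigcup a (A : nat -> set Y) :
  (forall n, Sigma0 a (A n)) -> Sigma0 a (\bigcup_n A n).
Proof.
move=> SA; case: (bord_cases a) => [h|[h h']|[h h']|h].
- have -> : \bigcup_n A n = set0.
    by apply/seteqP; split => x // [n _]; rewrite (Sigma0_le0 (SA n) h).
  exact: Sigma0_set0.
- apply: (Sigma0_beq _ h' h).
  by apply/Sigma0_oneE/bigcup_open => n _; exact: Sigma0_eq1 (SA n) h h'.
- have [U /choice [V HUV]] := choice (fun n => Sigma0_eq2 (SA n) h h').
  have -> : \bigcup_n A n = \bigcup_n \bigcup_m (U n m `\` V n m).
    by apply: eq_bigcupr => n _; case: (HUV n).
  by rewrite bigcup_pair; apply: Sigma0_two_of => // k; case: (HUV (Cantor.of_nat k).1).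
- have [d /choice [B HB]] := choice (fun n => Sigma0_gt2 (SA n) h).
  have -> : \bigcup_n A n = \bigcup_n \bigcup_m ~` (B n m).
    by apply: eq_bigcupr => n _; case: (HB n).
  rewrite bigcup_pair.
  apply: (@Sigma0_high_of _ (fun k => d (Cantor.of_nat k).1 (Cantor.of_nat k).2)) => // k.
  + by case: (HB (Cantor.of_nat k).1) => + _ _; apply.
  + by case: (HB (Cantor.of_nat k).1) => _ + _; apply.
Qed.

Lemma Sigma0_setU a A B : Sigma0 a A -> Sigma0 a B -> Sigma0 a (A `|` B).
Proof.
move=> SA SB; rewrite -bigcup2E; apply: Sigma0_bigcup => -[|[|n]] //=.
exact: Sigma0_set0.
Qed.

Lemma Sigma0_le a b A : bord_le a b -> Sigma0 a A -> Sigma0 b A.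
Proof.
move=> ab SA; case: (bord_cases a) => [h|[h h']|[h h']|h].
- by rewrite (Sigma0_le0 SA h); exact: Sigma0_set0.
- have oA := Sigma0_eq1 SA h h'.
  have b1 : bord_le bone b by exact: bord_le_trans h' ab.
  case: (bord_cases b) => [g|[g g']|[g g']|g].
  + by have := bord_le_trans b1 g.
  + by apply: (Sigma0_beq _ g' g); exact/Sigma0_oneE.
  + by apply: (Sigma0_beq _ g' g); exact: open_Sigma0_2.
  + rewrite -(setCK A) -(bigcup_cst (~` ~` A)).
    by apply: (@Sigma0_high_of _ (fun=> btwo)) => // _; exact: closed_Sigma0_2.
- have [U [V [oU oV ->]]] := Sigma0_eq2 SA h h'.
  have b2 : bord_le btwo b by exact: bord_le_trans h' ab.
  case: (bord_cases b) => [g|[g g']|[g g']|g].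
  + by have := bord_le_trans b2 g.
  + by have := bord_le_trans b2 g.
  + exact: Sigma0_two_of.
  + have -> : \bigcup_n (U n `\` V n) = \bigcup_n ~` (~` U n `|` V n).
      by apply: eq_bigcupr => n _; rewrite setCU setCK.
    apply: (@Sigma0_high_of _ (fun=> btwo)) => // n.
    by apply: Sigma0_setU; [exact: closed_Sigma0_2|exact: open_Sigma0_2].
- have [d [B [dn SB ->]]] := Sigma0_gt2 SA h.
  apply: Sigma0_high_of SB; first exact: bord_lt_le_trans h ab.
  by move=> n; exact: bord_lt_le_trans (dn n) ab.
Qed.

Lemma Sigma0_setT a : bord_le bone a -> Sigma0 a (@setT Y).
Proof. by move=> h; apply: Sigma0_le h _; apply/Sigma0_oneE; exact: openT. Qed.

Lemma bigcupI_pair T (U U' : nat -> set T) :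
  \bigcup_n U n `&` \bigcup_n U' n = \bigcup_n \bigcup_m (U n `&` U' m).
Proof.
apply/seteqP; split => x.
- by case=> -[n _ ?] [m _ ?]; exists n => //; exists m.
- by case=> n _ [m _ []]; split; [exists n|exists m].
Qed.

Lemma Sigma0_setI a A B : Sigma0 a A -> Sigma0 a B -> Sigma0 a (A `&` B).
Proof.
move=> SA SB; case: (bord_cases a) => [h|[h h']|[h h']|h].
- by rewrite (Sigma0_le0 SA h) set0I; exact: Sigma0_set0.
- apply: (Sigma0_beq _ h' h).
  by apply/Sigma0_oneE/openI; [exact: Sigma0_eq1 SA h h'|exact: Sigma0_eq1 SB h h'].
- have [U [V [oU oV ->]]] := Sigma0_eq2 SA h h'.
  have [U' [V' [oU' oV' ->]]] := Sigma0_eq2 SB h h'.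
  have setDIDU (A1 B1 A2 B2 : set Y) :
      (A1 `\` B1) `&` (A2 `\` B2) = (A1 `&` A2) `\` (B1 `|` B2).
    apply/seteqP; split => x; first by case=> -[? ?] [? ?]; split => // -[].
    by case=> -[? ?] nB; split; split => // ?; apply: nB; [left|right].
  rewrite bigcupI_pair; under eq_bigcupr do under eq_bigcupr do rewrite setDIDU.
  by rewrite bigcup_pair; apply: Sigma0_two_of => // k; [apply: openI|apply: openU].
- have [d [C [dn SC ->]]] := Sigma0_gt2 SA h.
  have [d' [C' [dn' SC' ->]]] := Sigma0_gt2 SB h.
  rewrite bigcupI_pair.
  under eq_bigcupr do under eq_bigcupr do rewrite -setCU.
  rewrite bigcup_pair.
  pose e n m := if pselect (bord_le (d n) (d' m)) then d' m else d n.
  apply: (@Sigma0_high_of _ (fun k => e (Cantor.of_nat k).1 (Cantor.of_nat k).2)) => // k;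
    case: (Cantor.of_nat k) => n m /=; rewrite /e; case: pselect => H.
  + exact: dn'.
  + exact: dn.
  + by apply: Sigma0_setU; [exact: Sigma0_le H (SC n)|exact: SC'].
  + apply: Sigma0_setU; first exact: SC.
    by apply: Sigma0_le (SC' m); have [|/bord_ltW] := bord_leVlt (d' m) (d n).
Qed.

Lemma Sigma0_setC a b B : bord_le btwo a -> bord_lt b a -> Sigma0 b B -> Sigma0 a (~` B).
Proof.
move=> a2 ba SB; case: (bord_cases a) => [h|[h h']|[h h']|h].
- by have := bord_le_trans a2 h.
- by have := bord_le_trans a2 h.
- have [b0|[b1 b1']|[g g']|g] := bord_cases b.
  + by rewrite (Sigma0_le0 SB b0) setC0; apply: Sigma0_setT; exact: bord_le_trans a2.
  + by apply: (Sigma0_beq _ h' h); apply: closed_Sigma0_2; exact: Sigma0_eq1 SB b1 b1'.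
  + by case: (bord_lt_irr (bord_lt_le_trans (bord_lt_le_trans ba h) g')).
  + by case: (bord_lt_irr (bord_lt_le_trans (bord_lt_le_trans ba h) (bord_ltW g))).
- by rewrite -(bigcup_cst (~` B)); apply: (@Sigma0_high_of _ (fun=> b)).
Qed.

Lemma Sigma0_ambiguous_cover a A : bord_le btwo a -> Sigma0 a A ->
  exists P : nat -> set Y, [/\ A = \bigcup_n P n, forall n, Sigma0 a (P n) &
     forall n, Sigma0 a (~` P n)].
Proof.
move=> a2 SA; case: (bord_cases a) => [h|[h h']|[h h']|h].
- by have := bord_le_trans a2 h.
- by have := bord_le_trans a2 h.
- have [U [V [oU oV ->]]] := Sigma0_eq2 SA h h'.
  exists (fun n => U n `\` V n); split => // n.
  + by rewrite -(bigcup_cst (U n `\` V n)); exact: Sigma0_two_of.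
  + apply: (Sigma0_beq _ h' h); rewrite setCD.
    by apply: Sigma0_setU; [exact: closed_Sigma0_2|exact: open_Sigma0_2].
- have [d [B [dn SB ->]]] := Sigma0_gt2 SA h.
  exists (fun n => ~` B n); split => // n; first exact: Sigma0_setC a2 (dn n) (SB n).
  by rewrite setCK; exact: Sigma0_le (bord_ltW (dn n)) (SB n).
Qed.
End SigmaClasses.

Lemma Sigma0_preimage (Z Y : topologicalType) (f : Z -> Y) a (A : set Y) :
  continuous f -> Sigma0 a A -> Sigma0 a (f @^-1` A).
Proof.
move=> cf; have open_pre U : open U -> open (f @^-1` U).
  by move=> oU; apply: open_comp => // x _; exact: cf.
elim => {a A}.
- by move=> a h; rewrite preimage_set0; apply: Sigma0_zero.
- by move=> a A h oA; apply: Sigma0_one => //; exact: open_pre.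
- move=> a A U V h oU oV ->; rewrite preimage_bigcup.
  under eq_bigcupr do rewrite setDE preimage_setI -preimage_setC -setDE.
  by apply: Sigma0_two h _ _ _ => // n; exact: open_pre.
- move=> a A b B h hb _ IH ->; rewrite preimage_bigcup.
  under eq_bigcupr do rewrite -preimage_setC.
  exact: Sigma0_high h hb IH _.
Qed.

Definition is_reduction T (S : set T -> Prop) (A A' : nat -> set T) :=
  [/\ forall n, S (A' n), forall n, A' n `<=` A n,
      trivIset setT A' & \bigcup_n A' n = \bigcup_n A n].

Definition reduction_property T (S : set T -> Prop) :=
  forall A : nat -> set T, (forall n, S (A n)) -> exists A', is_reduction S A A'.

Section Reduction.
Context {T : Type} (S : set T -> Prop).
Hypothesis S_set0 : S set0.
Hypothesis S_setT : S setT.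
Hypothesis S_setI : forall A B, S A -> S B -> S (A `&` B).
Hypothesis S_bigcup : forall A : nat -> set T, (forall n, S (A n)) -> S (\bigcup_n A n).
Hypothesis S_ambiguous_cover : forall A, S A -> exists P : nat -> set T,
   [/\ A = \bigcup_n P n, forall n, S (P n) & forall n, S (~` P n)].

(* Enumerate all ambiguous pieces [Q k] of all the [A n] in one sequence and
   keep each point only in the first piece that contains it. *)
Lemma reduction_of_ambiguous_cover : reduction_property S.
Proof.
move=> A SA.
have [P HP] := choice (fun n => S_ambiguous_cover (SA n)).
pose Q k := P (Cantor.of_nat k).1 (Cantor.of_nat k).2.
have SQ k : S (Q k) by case: (HP (Cantor.of_nat k).1) => _ + _; apply.
have SQC k : S (~` Q k) by case: (HP (Cantor.of_nat k).1) => _ _; apply.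
have QA k : Q k `<=` A (Cantor.of_nat k).1.
  by case: (HP (Cantor.of_nat k).1) => -> _ _ x Qx; exists (Cantor.of_nat k).2.
pose before k := \bigcap_(j in [set j | (j < k)%N]) ~` Q j.
have S_before k : S (before k).
  elim: k => [|k IH].
    by have -> : before 0%N = setT by apply/seteqP; split => // x _ j.
  have -> : before k.+1 = before k `&` ~` Q k.
    apply/seteqP; split => x.
    - by move=> H; split => [j /= jk|]; apply: H => //=; exact: ltnW.
    - by case=> H1 H2 j /=; rewrite ltnS leq_eqVlt => /orP [/eqP ->|/H1].
  exact: S_setI.
pose R k := Q k `&` before k.
exists (fun n => \bigcup_(k in [set k | (Cantor.of_nat k).1 = n]) R k); split.
- move=> n; rewrite bigcup_mkcond; apply: S_bigcup => k.
  by case: ifP => _; [exact: S_setI|exact: S_set0].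
- by move=> n x [k /= <- [Qk _]]; exact: QA Qk.
- move=> n m _ _ [x [[k /= <- [Qk bk]] [k' /= <- [Qk' bk']]]]; congr fst.
  have [kk'|k'k|->] := ltngtP k k' => //.
  + by case: (bk' k kk').
  + by case: (bk k' k'k).
- apply/seteqP; split => x; first by case=> n _ [k _ [/QA Ax _]]; exists (Cantor.of_nat k).1.
  case=> n _; case: (HP n) => -> _ _ [m _ Px].
  have Qx : exists k, `[< Q k x >].
    by exists (Cantor.to_nat (n, m)); apply/asboolP; rewrite /Q Cantor.cancel_of_to.
  case: (ex_minnP Qx) => k /asboolP Qk kmin.
  exists (Cantor.of_nat k).1 => //; exists k => //; split => // j /= jk Qj.
  by have := kmin j (asboolT Qj); rewrite leqNgt jk.
Qed.
End Reduction.

Lemma Sigma0_reduction (Y : topologicalType) a : bord_le btwo a ->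
  reduction_property (@Sigma0 Y a).
Proof.
move=> a2; apply: reduction_of_ambiguous_cover.
- exact: Sigma0_set0.
- exact: Sigma0_setT (bord_le_trans (I : bord_le bone btwo) a2).
- exact: Sigma0_setI.
- exact: Sigma0_bigcup.
- by move=> A; exact: Sigma0_ambiguous_cover.
Qed.

(** * Baire space *)

Definition cylinder (a : baire) (m : nat) : set baire :=
  [set b | forall i, (i < m)%N -> b i = a i].

Lemma nbhs_nat (n : nat) (A : set nat) : nbhs n A <-> A n.
Proof. by rewrite nbhs_principalE; exact: principal_filterP. Qed.

Lemma nbhs_cylinder (a : baire) m : nbhs a (cylinder a m).
Proof.
have nbhs_coord i : nbhs a [set b : baire | b i = a i].
  by apply: (@proj_continuous nat (fun _ => nat) i a [set a i]); exact/nbhs_nat.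
elim: m => [|m IH]; first by apply: filterS filterT => b _ i.
apply: filterS (filterI IH (nbhs_coord m)) => b [H1 H2] i.
by rewrite ltnS leq_eqVlt => /orP [/eqP ->|/H1].
Qed.

Lemma nbhs_sub_cylinder (a : baire) A : nbhs a A -> exists m, cylinder a m `<=` A.
Proof.
pose F := filter_from [set: nat] (cylinder a).
have FF : Filter F.
  apply: filter_from_filter; first by exists 0%N.
  move=> i j _ _; exists (maxn i j) => // b H; split => l l_lt; apply: H.
  - by apply: leq_trans l_lt _; rewrite leq_maxl.
  - by apply: leq_trans l_lt _; rewrite leq_maxr.
have : {ptws, F --> (a : {ptws nat -> nat})}.
  apply/pointwise_cvgP => t B /nbhs_nat Bt.
  by exists t.+1 => // b Hb /=; rewrite Hb.
by move=> /(_ A) H /H [m _ Hm]; exists m.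
Qed.

Lemma baire_continuousP (g : baire -> baire) : continuous g <->
  (forall a j, exists m, forall b, cylinder a m b -> g b j = g a j).
Proof.
split => [cg a j|H a].
- have gaj : nbhs (g a) [set c : baire | c j = g a j].
    by apply: filterS (nbhs_cylinder (g a) j.+1) => c; apply.
  by have /nbhs_sub_cylinder [m Hm] := cg a _ gaj; exists m => b /Hm.
- apply/pointwise_cvgP => t B /nbhs_nat Bt; have [m Hm] := H a t.
  by apply: filterS (nbhs_cylinder a m) => b /Hm /= ->.
Qed.

Lemma nbhs_prodP (T U : topologicalType) (p : T * U) (A : set (T * U)) :
  nbhs p A <-> exists P Q, [/\ nbhs p.1 P, nbhs p.2 Q & P `*` Q `<=` A].
Proof.
split; first by case=> -[P Q] /= [HP HQ] H; exists P, Q.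
by case=> P [Q [HP HQ H]]; exists (P, Q).
Qed.

Lemma continuous_map_fst (T U V : topologicalType) (f : T -> U) :
  continuous f -> continuous (fun z : T * V => (f z.1, z.2)).
Proof.
move=> cf [a x] W /nbhs_prodP [P [Q [HP HQ PQW]]].
apply/nbhs_prodP; exists (f @^-1` P), Q; split => //; first exact: cf.
by move=> [b y] [/= Pb Qy]; apply: PQW.
Qed.

Lemma continuous_pair_cst (T U : topologicalType) (b : T) :
  continuous (fun x : U => (b, x)).
Proof. by move=> x; apply: cvg_pair; [exact: cvg_cst|exact: cvg_id]. Qed.

(* Baire space is homeomorphic to its countable power, via Cantor pairing. *)
Definition baire_proj (j : nat) (a : baire) : baire :=
  fun m => a (Cantor.to_nat (j, m)).

Definition baire_tuple (gs : nat -> baire -> baire) (a : baire) : baire :=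
  fun k => gs (Cantor.of_nat k).1 a (Cantor.of_nat k).2.

Lemma baire_proj_continuous j : continuous (baire_proj j).
Proof.
apply/baire_continuousP => a i; exists (Cantor.to_nat (j, i)).+1 => b Hb.
by rewrite /baire_proj Hb.
Qed.

Lemma baire_tupleK gs j a : baire_proj j (baire_tuple gs a) = gs j a.
Proof. by apply: funext => m; rewrite /baire_proj /baire_tuple Cantor.cancel_of_to. Qed.

Lemma baire_tuple_continuous gs :
  (forall j, continuous (gs j)) -> continuous (baire_tuple gs).
Proof.
move=> cg; apply/baire_continuousP => a k.
have /baire_continuousP /(_ a (Cantor.of_nat k).2) [m Hm] := cg (Cantor.of_nat k).1.
by exists m => b Hb; rewrite /baire_tuple Hm.
Qed.

Lemma second_countable_base_seq (X : topologicalType) : @second_countable X ->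
  exists e : nat -> set X, (forall n, open (e n)) /\
    forall x W, nbhs x W -> exists n, e n x /\ e n `<=` W.
Proof.
case=> B cB [Bo Bb].
have [f finj] : exists f : set X -> nat, {in B &, injective f} by exact/pcard_injP.
pose e n := if pselect (exists U, B U /\ f U = n) is left H then proj1_sig (cid H)
            else set0.
have eB U : B U -> e (f U) = U.
  move=> BU; rewrite /e; case: pselect => [H|[]]; last by exists U.
  by case: (cid H) => V [BV fV] /=; apply: finj => //; rewrite inE.
exists e; split.
- move=> n; rewrite /e; case: pselect => [H|_]; last exact: open0.
  by case: (cid H) => V [BV _] /=; exact: Bo.
- by move=> x W /Bb [U [BU Ux] UW]; exists (f U); rewrite eB.
Qed.

(** * Universal sets *)

Fixpoint bord_preds (t : bord) : nat -> option bord :=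
  match t with
  | bzero => fun _ => None
  | bsucc t0 => fun _ => Some t0
  | blim f => fun n => bord_preds (f (Cantor.of_nat n).1) (Cantor.of_nat n).2
  end.

Lemma bord_preds_lt t n b : bord_preds t n = Some b -> bord_lt b t.
Proof.
elim: t n => [//|t0 _|f IH] n /=; first by case=> <-; exact: bord_le_refl.
by move=> /IH H; exists (Cantor.of_nat n).1.
Qed.

Lemma bord_preds_cofinal t b : bord_lt b t ->
  exists n c, bord_preds t n = Some c /\ bord_le b c.
Proof.
elim: t => [//|t0 _|f IH] /=; first by move=> H; exists 0%N, t0.
case=> i /IH [n [c [H1 H2]]]; exists (Cantor.to_nat (i, n)), c.
by rewrite Cantor.cancel_of_to.
Qed.

Definition cof_seq (t : bord) (m : nat) : bord :=
  if bord_preds t m is Some b then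
    if pselect (bord_le btwo b) then b else btwo
  else btwo.

Lemma cof_seq_lt t m : bord_lt btwo t -> bord_lt (cof_seq t m) t.
Proof.
move=> h; rewrite /cof_seq; case E: (bord_preds t m) => [b|//].
by case: pselect => ?; [exact: bord_preds_lt E|exact: h].
Qed.

Lemma cof_seq_ge2 t m : bord_le btwo (cof_seq t m).
Proof.
rewrite /cof_seq; case: (bord_preds t m) => [b|]; last exact: bord_le_refl.
by case: pselect => ?; last exact: bord_le_refl.
Qed.

Lemma cof_seq_cofinal t b : bord_lt b t -> exists m, bord_le b (cof_seq t m).
Proof.
move=> /bord_preds_cofinal [m [c [E bc]]]; exists m; rewrite /cof_seq E.
case: pselect => // H; have [/H //|/bord_ltW] := bord_leVlt c btwo.
exact: bord_le_trans.
Qed.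

Section Universal.
Context {X : topologicalType}.

Definition universal th (U : baire -> set X) :=
  Sigma0 th [set z : baire * X | U z.1 z.2] /\
  forall V : set (baire * X), Sigma0 th V ->
    exists g : baire -> baire, continuous g /\ forall a x, V (a, x) <-> U (g a) x.

(* [a n = 0] codes the empty set and [a n = k.+1] the basic open [e k]. *)
Definition base_union (e : nat -> set X) (a : baire) : set X :=
  \bigcup_n (if a n is k.+1 then e k else set0).

Lemma universal_base_union (e : nat -> set X) : (forall n, open (e n)) ->
  (forall x W, nbhs x W -> exists n, e n x /\ e n `<=` W) ->
  universal bone (base_union e).
Proof.
move=> eo eb; split.
- apply/Sigma0_oneE; rewrite openE => -[a x] /= [n _].
  case E: (a n) => [//|k] ekx; apply/nbhs_prodP.
  exists (cylinder a n.+1), (e k); split; first exact: nbhs_cylinder.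
  + by apply: open_nbhs_nbhs; split => //; exact: eo.
  + by move=> [b y] [/= Hb ey]; exists n => //; rewrite Hb // E.
- move=> V /Sigma0_oneE oV.
  pose g (a : baire) : baire := fun j =>
    if pselect (cylinder a (Cantor.of_nat j).1 `*` e (Cantor.of_nat j).2 `<=` V)
    then (Cantor.of_nat j).2.+1 else 0%N.
  exists g; split.
  + apply/baire_continuousP => a j; exists (Cantor.of_nat j).1 => b Hb; rewrite /g.
    suff -> : cylinder b (Cantor.of_nat j).1 = cylinder a (Cantor.of_nat j).1 by [].
    by apply/seteqP; split => c Hc i ilt; rewrite Hc // ?Hb // -Hb.
  + move=> a x; split.
    * move=> /(oV (a, x)) /nbhs_prodP.
      move=> [P [Q [/nbhs_sub_cylinder [m Hm] /eb [k [ekx ekQ]] PQV]]].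
      exists (Cantor.to_nat (m, k)) => //.
      rewrite /g Cantor.cancel_of_to /=; case: pselect => // -[].
      by move=> [b y] [/= /Hm Pb /ekQ Qy]; apply: PQV.
    * case=> j _; rewrite /g; case: pselect => // H ex.
      by apply: (H (a, x)); split => //=.
Qed.

Lemma Sigma0_baire_proj th (U : baire -> set X) j :
  Sigma0 th [set z : baire * X | U z.1 z.2] ->
  Sigma0 th [set z : baire * X | U (baire_proj j z.1) z.2].
Proof.
by move=> /(Sigma0_preimage (continuous_map_fst (V := X) (@baire_proj_continuous j))).
Qed.

Definition diff_union (U : baire -> set X) (a : baire) : set X :=
  \bigcup_n (U (baire_proj n.*2 a) `\` U (baire_proj n.*2.+1 a)).

Lemma universal_diff_union th U : bord_le th btwo -> bord_le btwo th ->
  universal bone U -> universal th (diff_union U).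
Proof.
move=> h h' [SU uU]; split.
- apply: Sigma0_two_of => // n;
    by apply/Sigma0_oneE; exact: Sigma0_baire_proj.
- move=> V SV; have [P [Q [oP oQ ->]]] := Sigma0_eq2 SV h h'.
  have [g Hg] := choice (fun n => uU _ (proj2 (Sigma0_oneE _) (oP n))).
  have [g' Hg'] := choice (fun n => uU _ (proj2 (Sigma0_oneE _) (oQ n))).
  pose gs j := if odd j then g' j./2 else g j./2.
  have gs_even n a : baire_proj n.*2 (baire_tuple gs a) = g n a.
    by rewrite baire_tupleK /gs odd_double doubleK.
  have gs_odd n a : baire_proj n.*2.+1 (baire_tuple gs a) = g' n a.
    by rewrite baire_tupleK /gs /= odd_double /= uphalf_double.
  exists (baire_tuple gs); split.
  + apply: baire_tuple_continuous => j; rewrite /gs.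
    by case: odd; [case: (Hg' j./2)|case: (Hg j./2)].
  + move=> a x; rewrite /diff_union; split => -[n _]; rewrite ?gs_even ?gs_odd => -[Px Qx];
      exists n => //; rewrite ?gs_even ?gs_odd;
      by split; [exact/(proj2 (Hg n))|move/(proj2 (Hg' n)); exact: Qx].
Qed.

Definition compl_union (Us : nat -> baire -> set X) (a : baire) : set X :=
  \bigcup_j ~` Us (Cantor.of_nat j).1 (baire_proj j a).

Lemma universal_compl_union th Us : bord_lt btwo th ->
  (forall m, universal (cof_seq th m) (Us m)) -> universal th (compl_union Us).
Proof.
move=> h u; split.
- apply: (@Sigma0_high_of _ _ (fun j => cof_seq th (Cantor.of_nat j).1)) => // j.
  + exact: cof_seq_lt.
  + exact: Sigma0_baire_proj (u _).1.
- move=> V SV; have [d [B [dn SB ->]]] := Sigma0_gt2 SV h.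
  have [m Hm] := choice (fun n => cof_seq_cofinal (dn n)).
  have [g Hg] := choice (fun n => (u (m n)).2 _ (Sigma0_le (Hm n) (SB n))).
  have [full Hfull] := choice (fun m => (u m).2 _
     (Sigma0_setT (bord_le_trans (I : bord_le bone btwo) (cof_seq_ge2 th m)))).
  (* Coordinates [j] whose index is not of the form [(m n, n)] receive a code of
     the full set, so that their complement contributes nothing. *)
  pose gs j := if (Cantor.of_nat j).1 == m (Cantor.of_nat j).2
               then g (Cantor.of_nat j).2
               else fun=> full (Cantor.of_nat j).1 (fun=> 0%N).
  exists (baire_tuple gs); split.
  + apply: baire_tuple_continuous => j; rewrite /gs; case: eqP => _.
    * by case: (Hg (Cantor.of_nat j).2).
    * exact: cst_continuous.
  + move=> a x; split.
    * case=> n _ nBx; exists (Cantor.to_nat (m n, n)) => //.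
      rewrite baire_tupleK /gs Cantor.cancel_of_to /= eqxx.
      by move/(proj2 ((Hg n).2 a x)); exact: nBx.
    * case=> j _; rewrite baire_tupleK /gs; case: eqP => [E|_] H.
      - exists (Cantor.of_nat j).2 => // Bx; apply: H; rewrite E.
        exact/(proj1 ((Hg _).2 a x)).
      - by case: H; apply/(proj1 ((Hfull _).2 (fun=> 0%N) x)).
Qed.

Lemma universal_exists : @second_countable X ->
  forall th, bord_le btwo th -> exists U, universal th U.
Proof.
move=> sc th; have [e [eo eb]] := second_countable_base_seq sc.
elim: (bord_lt_wf th) => {}th _ IH th2.
case: (bord_cases th) => [g|[g g']|[g g']|g].
- by have := bord_le_trans th2 g.
- by have := bord_le_trans th2 g.
- exists (diff_union (base_union e)).
  exact: universal_diff_union (universal_base_union eo eb).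
- have [Us HUs] := choice (fun m => IH _ (cof_seq_lt m g) (cof_seq_ge2 th m)).
  by exists (compl_union Us); exact: universal_compl_union.
Qed.
End Universal.

(** * Forests *)

Section FiniteStrictOrder.
Context {A : Type} (R : A -> A -> Prop).
Hypothesis R_trans : forall x y z, R x y -> R y z -> R x z.
Hypothesis R_irr : forall x, ~ R x x.

Lemma finite_no_descending_seq (C : set A) (s : nat -> A) : finite_set C ->
  (forall n, C (s n)) -> ~ (forall n, R (s n.+1) (s n)).
Proof.
move=> fC Cs Rs.
have Rlt n m : (n < m)%N -> R (s m) (s n).
  elim: m => [//|m IH]; rewrite ltnS leq_eqVlt => /orP [/eqP ->|/IH H] //.
  exact: R_trans (Rs m) H.
have s_inj : injective s.
  move=> n m E; have [nm|mn|//] := ltngtP n m.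
  - by have := Rlt _ _ nm; rewrite E => /R_irr.
  - by have := Rlt _ _ mn; rewrite E => /R_irr.
have : finite_set (s @^-1` range s).
  apply: finite_preimage; last by apply: sub_finite_set fC => _ [n _ <-].
  by move=> x y _ _; apply: s_inj.
have -> : s @^-1` range s = setT by apply/seteqP; split => // n _; exists n.
exact: infinite_nat.
Qed.

Lemma finite_has_minimal (C : set A) c0 : finite_set C -> C c0 ->
  exists m, C m /\ forall q, C q -> ~ R q m.
Proof.
move=> fC Cc0; apply: contrapT => noMin.
have step p : exists q, C p -> C q /\ R q p.
  have [Cp|] := pselect (C p); last by exists p.
  have /existsNP [q /not_implyP [Cq /contrapT Rq]] : ~ forall q, C q -> ~ R q p.
    by move=> H; apply: noMin; exists p.
  by exists q.
have [f Hf] := choice step.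
pose s n := iter n f c0.
have Cs n : C (s n) by elim: n => [//|n IH] /=; case: (Hf (s n) IH).
by apply: (finite_no_descending_seq fC Cs) => n; case: (Hf (s n) (Cs n)).
Qed.

Lemma Acc_finite_below (below : A -> set A) : (forall p, finite_set (below p)) ->
  (forall p q, R q p -> below p q) ->
  (forall p q q', below p q -> R q' q -> below p q') ->
  forall p, Acc R p.
Proof.
move=> fin_below Rbelow below_closed p; apply: contrapT => nAp.
have step x : exists y, ~ Acc R x -> ~ Acc R y /\ R y x.
  have [Ax|nAx] := pselect (Acc R x); first by exists x.
  have /existsNP [y /not_implyP [Ryx nAy]] : ~ forall y, R y x -> Acc R y.
    by move=> K; apply: nAx; constructor.
  by exists y.
have [f Hf] := choice step.
pose s n := iter n f p.
have nAs n : ~ Acc R (s n) by elim: n => [//|n IH] /=; case: (Hf (s n) IH).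
have Rs n : R (s n.+1) (s n) by case: (Hf (s n) (nAs n)).
have below_s n : below p (s n.+1).
  by elim: n => [|n IH]; [exact: Rbelow (Rs 0%N)|exact: below_closed IH (Rs n.+1)].
exact: (finite_no_descending_seq (fin_below p) below_s).
Qed.
End FiniteStrictOrder.

Section ForestOrder.
Context {k : nat} (T : kforest k).
Local Notation node := (fnode T).
Implicit Types p q c : node.

Lemma flt_trans p q c : flt p q -> flt q c -> flt p c.
Proof.
move=> [pq npq] [qc nqc]; split; first exact: fle_trans pq qc.
by move=> E; subst c; apply: npq; exact: fle_antisym pq qc.
Qed.

Lemma fgt_trans p q c : flt q p -> flt c q -> flt c p.
Proof. by move=> qp cq; exact: flt_trans cq qp. Qed.

Lemma flt_irr p : ~ flt p p.
Proof. by case. Qed.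

Definition is_chain (C : set node) := forall x y, C x -> C y -> fle x y \/ fle y x.

Lemma chain_has_min (C : set node) c0 : is_chain C -> C c0 ->
  exists m, C m /\ forall q, C q -> fle m q.
Proof.
move=> cC Cc0.
have [m [Cm Hm]] := finite_has_minimal flt_trans flt_irr (fle_chains_finite cC) Cc0.
exists m; split => // q Cq; case: (cC m q Cm Cq) => // qm.
by have [->|nqm] := pselect (q = m); [exact: fle_refl|case: (Hm q Cq)].
Qed.

Lemma chain_has_max (C : set node) c0 : is_chain C -> C c0 ->
  exists m, C m /\ forall q, C q -> fle q m.
Proof.
move=> cC Cc0.
have [m [Cm Hm]] := finite_has_minimal fgt_trans flt_irr (fle_chains_finite cC) Cc0.
exists m; split => // q Cq; case: (cC m q Cm Cq) => // qm.
by have [->|nqm] := pselect (m = q); [exact: fle_refl|case: (Hm q Cq)].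
Qed.

Lemma flt_up_Acc p : Acc (fun q p => flt p q) p.
Proof.
apply: (Acc_finite_below fgt_trans flt_irr (below := fun p => [set q | fle p q])).
- by move=> q; apply: fle_chains_finite => x y; exact: fle_cones_chains.
- by move=> q q' [].
- by move=> q q' q'' qq' [q'q'' _]; exact: fle_trans qq' q'q''.
Qed.

Definition child c p := flt c p /\ forall s, flt c s -> fle s p -> s = p.

Lemma child_exists q p : flt q p -> exists c, child c p /\ fle q c.
Proof.
move=> qp.
have cC : is_chain [set s | fle q s /\ flt s p].
  by move=> x y [qx _] [qy _]; exact: fle_cones_chains qx qy.
have [c [[qc cp] Hc]] := chain_has_max cC (conj (fle_refl q) qp).
exists c; split => //; split => // s [cs ncs] sp; apply: contrapT => nsp.
have sc : fle s c by apply: Hc; split; [exact: fle_trans qc cs|].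
by apply: ncs; exact: fle_antisym cs sc.
Qed.

Lemma child_uniq c p p' : child c p -> child c p' -> p = p'.
Proof.
move=> [cp Hp] [cp' Hp'].
by case: (fle_cones_chains cp.1 cp'.1) => H; [exact: Hp' cp H|exact/esym/(Hp _ cp' H)].
Qed.

Lemma child_le_above c p q : child c p -> flt c q -> fle p q.
Proof.
move=> [cp Hp] cq; case: (fle_cones_chains cp.1 cq.1) => // qp.
by rewrite (Hp q cq qp); exact: fle_refl.
Qed.

Lemma min_label_preimage {Z : Type} (G : node -> set Z) (m : Z -> node) :
  (forall z, G (m z) z /\ forall q, G q z -> fle (m z) q) ->
  forall i, (fun z => flabel (m z)) @^-1` [set i] =
    \bigcup_(p in [set p | flabel p = i]) (G p `\` \bigcup_(q in [set q | flt q p]) G q).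
Proof.
move=> m_min i; apply/seteqP; split => z /=.
- move=> <-; exists (m z) => //; split; first by case: (m_min z).
  by case=> q [qm nqm] Gq; apply: nqm; exact: fle_antisym qm ((m_min z).2 q Gq).
- case=> p <- [Gp nG]; congr flabel; apply: contrapT => nmp; apply: nG.
  by exists (m z); [split => //; exact: (m_min z).2|case: (m_min z)].
Qed.

Lemma partition_label {Z : Type} (A : Z -> 'I_k) (C : node -> set Z) m z :
  (forall i, A @^-1` [set i] =
    \bigcup_(p in [set p | flabel p = i]) (C p `\` \bigcup_(q in [set q | flt q p]) C q)) ->
  C m z -> (forall q, flt q m -> ~ C q z) -> A z = flabel m.
Proof.
move=> A_part Cm m_min; have /= := f_equal (fun B => B z) (A_part (flabel m)).
by move=> ->; exists m => //; split => // -[q qm Cq]; exact: m_min qm Cq.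
Qed.
End ForestOrder.

(** * Normalising a family of sets along a tree *)

Section TreeReduction.
Context {k : nat} (T : kforest k) (r : fnode T).
Hypothesis r_top : forall p, fle p r.
Variable idx : fnode T -> nat.
Hypothesis idx_inj : injective idx.
Local Notation node := (fnode T).
Implicit Types p q c : node.

Context {Z : Type} (S : set Z -> Prop).
Hypothesis S_set0 : S set0.
Hypothesis S_setT : S setT.
Hypothesis S_setI : forall A B, S A -> S B -> S (A `&` B).
Hypothesis S_bigcup : forall A : nat -> set Z, (forall n, S (A n)) -> S (\bigcup_n A n).

Lemma S_bigcup_nodes (P : set node) (F : node -> set Z) :
  (forall p, P p -> S (F p)) -> S (\bigcup_(p in P) F p).
Proof.
move=> SF.
pose H n := if pselect (exists p, P p /\ idx p = n) is left h
            then F (proj1_sig (cid h)) else set0.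
suff -> : \bigcup_(p in P) F p = \bigcup_n H n.
  apply: S_bigcup => n; rewrite /H; case: pselect => // h.
  by case: (cid h) => q /= [Pq _]; exact: SF.
apply/seteqP; split => z.
- case=> p Pp Fz; exists (idx p) => //; rewrite /H.
  case: pselect => [h|[]]; last by exists p.
  by case: (cid h) => q /= [_ /idx_inj ->].
- case=> n _; rewrite /H; case: pselect => // h.
  by case: (cid h) => q /= [Pq _] Fz; exists q.
Qed.

Lemma fle_root_eq q : fle r q -> q = r.
Proof. by move=> rq; exact: fle_antisym (r_top q) rq. Qed.

Lemma flt_neq_root p q : flt p q -> p <> r.
Proof. by move=> [pq npq] pr; subst p; apply: npq; rewrite (fle_root_eq pq). Qed.

Lemma parent_exists p : p <> r -> exists pp, child p pp.
Proof.
move=> pr.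
have cC : is_chain [set s | flt p s].
  by move=> x y [px _] [py _]; exact: fle_cones_chains px py.
have [pp [ppp Hpp]] := chain_has_min cC (conj (r_top p) pr : flt p r).
by exists pp; split => // s ps sp; exact: fle_antisym sp (Hpp s ps).
Qed.

Variable F : node -> set Z.
Hypothesis S_F : forall p, S (F p).

Definition F_below p := \bigcup_(q in [set q | fle q p]) F q.

Definition F_children p (n : nat) :=
  \bigcup_(c in [set c | child c p /\ idx c = n]) F_below c.

Lemma S_F_children p n : S (F_children p n).
Proof. by apply: S_bigcup_nodes => c _; apply: S_bigcup_nodes => q _. Qed.

Section Levels.
Variable Fred : node -> nat -> set Z.
Hypothesis Fred_reduction : forall p, is_reduction S (F_children p) (Fred p).

Definition piece c := \bigcup_(p in [set p | child c p]) Fred p (idx c).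

(* Reducing the children of every node makes [[set p | level p z]] a chain,
   and its least element is F-minimal at [z]. *)
Definition level p := [set z | forall q, fle p q -> q <> r -> piece q z].

Lemma S_piece c : S (piece c).
Proof. by apply: S_bigcup_nodes => p _; case: (Fred_reduction p). Qed.

Lemma piece_child c pp z : child c pp -> piece c z -> Fred pp (idx c) z.
Proof. by move=> cp [p0 cp0 Ez]; rewrite (child_uniq cp cp0). Qed.

Lemma level_root : level r = setT.
Proof. by apply/seteqP; split => // z _ q /fle_root_eq. Qed.

Lemma level_le p q : fle p q -> level p `<=` level q.
Proof. by move=> pq z Lz q' qq' nr; apply: Lz => //; exact: fle_trans pq qq'. Qed.

Lemma level_child p pp : child p pp -> level p = piece p `&` level pp.
Proof.
move=> cp; apply/seteqP; split => z.
- move=> Lz; split; last exact: level_le cp.1.1 _ Lz.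
  by apply: Lz; [exact: fle_refl|exact: flt_neq_root cp.1].
- case=> Pz Lz q pq qr; have [<- //|npq] := pselect (p = q).
  by apply: Lz => //; exact: child_le_above cp (conj pq npq).
Qed.

Lemma S_level p : S (level p).
Proof.
elim: (flt_up_Acc p) => {}p _ IH.
have [->|/parent_exists [pp cp]] := pselect (p = r); first by rewrite level_root.
by rewrite (level_child cp); apply: S_setI; [exact: S_piece|exact: IH cp.1].
Qed.

(* Two incomparable nodes have distinct children of their least common upper
   bound above them, and the reduced family of that bound is disjoint. *)
Lemma level_chain z : is_chain [set p | level p z].
Proof.
move=> p p' Lp Lp'; apply: contrapT => nc.
have cM : is_chain [set s | fle p s /\ fle p' s].
  by move=> x y [px _] [py _]; exact: fle_cones_chains px py.
have [s [[ps p's] Hs]] := chain_has_min cM (conj (r_top p) (r_top p')).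
have lps : flt p s by split => // E; subst s; apply: nc; right.
have lp's : flt p' s by split => // E; subst s; apply: nc; left.
have [c [cs pc]] := child_exists lps.
have [c' [c's p'c']] := child_exists lp's.
have Pc : piece c z by apply: Lp => //; exact: flt_neq_root cs.1.
have Pc' : piece c' z by apply: Lp' => //; exact: flt_neq_root c's.1.
have [_ _ disj _] := Fred_reduction s.
have Ecc : c = c'.
  apply: idx_inj; apply: disj => //; exists z.
  by split; [exact: piece_child cs Pc|exact: piece_child c's Pc'].
subst c'; have [[cs1 ncs] _] := cs.
by apply: ncs; exact: fle_antisym cs1 (Hs c (conj pc p'c')).
Qed.

Lemma level_min z : exists m, level m z /\ forall q, level q z -> fle m q.
Proof.
have Lr : level r z by rewrite level_root.
exact: chain_has_min (@level_chain z) Lr.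
Qed.

Lemma level_min_F_minimal z m : level m z -> (forall q, level q z -> fle m q) ->
  (m = r \/ F m z) /\ forall q, flt q m -> ~ F q z.
Proof.
move=> Lm m_min.
have no_child c : child c m -> ~ F_below c z.
  move=> cm Fc; have [_ Fred_sub _ Fred_cup] := Fred_reduction m.
  have : (\bigcup_n F_children m n) z by exists (idx c) => //; exists c.
  rewrite -Fred_cup => -[n _ /[dup] Fz /Fred_sub [c' [c'm c'n] _]]; subst n.
  have Lc' : level c' z by rewrite (level_child c'm); split => //; exists m.
  have [[c'm1 nc'm] _] := c'm.
  by apply: nc'm; exact: fle_antisym c'm1 (m_min c' Lc').
have below_not_F q : flt q m -> ~ F q z.
  by move=> /child_exists [c [cm qc]] Fq; apply: (no_child c cm); exists q.
split => //; have [->|mr] := pselect (m = r); [by left|right].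
have [pp cpp Fz] := Lm m (fle_refl _) mr.
have [_ Fred_sub _ _] := Fred_reduction pp.
have [c [_ /idx_inj cm] [q qm Fq]] := Fred_sub _ _ Fz; subst c.
by have [<- //|nqm] := pselect (q = m); case: (below_not_F q (conj qm nqm)).
Qed.
End Levels.

Hypothesis S_reduction : reduction_property S.

Lemma tree_partition : exists (G : node -> set Z) (lab : Z -> 'I_k),
  [/\ forall p, S (G p), \bigcup_p G p = setT,
      forall i, lab @^-1` [set i] =
        \bigcup_(p in [set p | flabel p = i]) (G p `\` \bigcup_(q in [set q | flt q p]) G q) &
      forall z, exists m, [/\ lab z = flabel m, m = r \/ F m z &
                             forall q, flt q m -> ~ F q z]].
Proof.
have [Fred Fred_red] := choice (fun p => S_reduction (@S_F_children p)).
have [m m_min] := choice (@level_min Fred Fred_red).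
exists (level Fred), (fun z => flabel (m z)); split.
- exact: S_level.
- by apply/seteqP; split => // z _; exists r => //; rewrite level_root.
- exact: min_label_preimage.
- move=> z; exists (m z); have [Lm Hm] := m_min z.
  by have [] := level_min_F_minimal Fred_red Lm Hm.
Qed.
End TreeReduction.

(** * Zero-dimensional spaces *)

Section ZeroDimensional.
Context {X : topologicalType}.

Lemma zero_dim_clopen_base_seq : @second_countable X -> zero_dim X ->
  exists c : nat -> set X, (forall n, clopen (c n)) /\
    forall x W, nbhs x W -> exists n, c n x /\ c n `<=` W.
Proof.
move=> sc [B [[Bo Bb] Bc]]; have [e [eo eb]] := second_countable_base_seq sc.
pose between j C := B C /\ e (Cantor.of_nat j).1 `<=` C /\ C `<=` e (Cantor.of_nat j).2.
pose c j := if pselect (exists C, between j C) is left h then proj1_sig (cid h) else set0.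
exists c; split.
- move=> j; rewrite /c; case: pselect => [h|nh]; last exact: clopen0.
  by case: (cid h) => C [BC _] /=; exact: Bc.
- move=> x W /eb [j [ejx ejW]].
  have /Bb [C [BC Cx] Cej] : nbhs x (e j) by apply: open_nbhs_nbhs; split.
  have /eb [i [eix eiC]] : nbhs x C by apply: open_nbhs_nbhs; split => //; exact: Bo.
  exists (Cantor.to_nat (i, j)); rewrite /c /between Cantor.cancel_of_to /=.
  case: pselect => [h|[]]; last by exists C.
  case: (cid h) => C' [_ [H1 H2]] /=.
  by split; [exact: H1|move=> y /H2 /ejW].
Qed.

Definition prefix_set (s : seq nat) : set baire :=
  [set b | forall l, (l < size s)%N -> b l = nth 0%N s l].

Lemma prefix_set_clopen s : clopen (prefix_set s).
Proof.
split; first rewrite openE => b Hb.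
  apply: filterS (nbhs_cylinder b (size s)) => b' H l ls.
  by rewrite H // Hb.
rewrite -openC openE => b /existsNP [l /not_implyP [ls bl]].
apply: filterS (nbhs_cylinder b l.+1) => b' H H'.
by apply: bl; rewrite -H' // H.
Qed.

Lemma clopen_setX (Y Y' : topologicalType) (A : set Y) (C : set Y') :
  clopen A -> clopen C -> clopen (A `*` C).
Proof.
have open_setX (P : set Y) (Q : set Y') : open P -> open Q -> open (P `*` Q).
  move=> oP oQ; rewrite openE => -[a y] [/= Pa Qy]; apply/nbhs_prodP.
  by exists P, Q; split => //; apply: open_nbhs_nbhs.
move=> [oA cA] [oC cC]; split; first exact: open_setX.
have -> : A `*` C = ~` ((~` A) `*` setT `|` setT `*` (~` C)).
  apply/seteqP; split => -[a y] /=; first by move=> [Aa Cy] [[]|[]].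
  by move=> H; split; apply: contrapT => ?; apply: H; [left|right].
by rewrite closedC; apply: openU; apply: open_setX; rewrite ?openC //; exact: openT.
Qed.

Lemma open_bigcup_clopen : @second_countable X -> zero_dim X ->
  forall A : set (baire * X), open A ->
  exists P : nat -> set (baire * X), A = \bigcup_n P n /\ forall n, clopen (P n).
Proof.
move=> sc zd A oA; have [c [cc cb]] := zero_dim_clopen_base_seq sc zd.
pose box j := if (unpickle (Cantor.of_nat j).1 : option (seq nat)) is Some s
              then prefix_set s `*` c (Cantor.of_nat j).2 else set0.
pose P j := if pselect (box j `<=` A) then box j else set0.
exists P; split.
- apply/seteqP; split => -[a x]; last by case=> j _; rewrite /P; case: pselect => // H /H.
  move=> /(oA (a, x)) /nbhs_prodP [Q [W [/= /nbhs_sub_cylinder [m Hm] /cb [n [cnx cnW]] QWA]]].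
  have pref_a : prefix_set (mkseq a m) a.
    by move=> l; rewrite size_mkseq => lm; rewrite nth_mkseq.
  have pref_cyl : prefix_set (mkseq a m) `<=` cylinder a m.
    by move=> b Hb l lm; rewrite Hb ?size_mkseq // nth_mkseq.
  exists (Cantor.to_nat (pickle (mkseq a m), n)) => //.
  rewrite /P /box Cantor.cancel_of_to pickleK /=.
  case: pselect => [_ //|[]].
  by move=> [b y] [/= /pref_cyl /Hm Qb /cnW Wy]; apply: QWA.
- have clopen_box j : clopen (box j).
    rewrite /box; case: unpickle => [s|]; last exact: clopen0.
    exact: clopen_setX (prefix_set_clopen s) (cc _).
  by move=> j; rewrite /P; case: pselect => ?; [exact: clopen_box|exact: clopen0].
Qed.
End ZeroDimensional.

Lemma Sigma1_reduction_zero_dim (X : topologicalType) :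
  @second_countable X -> zero_dim X -> reduction_property (@Sigma0 (baire * X)%type bone).
Proof.
move=> sc zd; apply: reduction_of_ambiguous_cover.
- exact: Sigma0_set0.
- exact: Sigma0_setT (bord_le_refl _).
- exact: Sigma0_setI.
- exact: Sigma0_bigcup.
- move=> A /Sigma0_oneE /(open_bigcup_clopen sc zd) [P [-> clP]].
  exists P; split => // n; apply/Sigma0_oneE; first exact: (clP n).1.
  by rewrite openC; exact: (clP n).2.
Qed.

(** * Principal total representations *)

Section Representation.
Context {X : topologicalType} {k : nat} (T : kforest k).
Local Notation node := (fnode T).

Lemma total_rep_of_partition th (G : node -> set (baire * X)) (lab : baire * X -> 'I_k) :
  (forall p, Sigma0 th (G p)) -> \bigcup_p G p = setT ->
  (forall i, lab @^-1` [set i] =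
    \bigcup_(p in [set p | flabel p = i]) (G p `\` \bigcup_(q in [set q | flt q p]) G q)) ->
  total_rep th T (fun b x => lab (b, x)).
Proof.
move=> SG Gcov Glab; split; last first.
  by exists G; split => // i; rewrite -Glab; apply/seteqP; split => -[b x].
move=> b; exists (fun p => (fun x => (b, x)) @^-1` G p); split.
- by move=> p; move: (SG p) => /(Sigma0_preimage (@continuous_pair_cst baire X b)).
- by rewrite -preimage_bigcup Gcov preimage_setT.
- move=> i; rewrite -[_ @^-1` _]/((fun x => (b, x)) @^-1` (lab @^-1` [set i])).
  rewrite Glab preimage_bigcup; apply: eq_bigcupr => p _.
  by rewrite setDE preimage_setI -preimage_setC preimage_bigcup -setDE.
Qed.

Section Factorization.
Variables (r : node) (idx : node -> nat) (th : bord) (U : baire -> set X).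
Hypothesis r_top : forall p, fle p r.
Hypothesis idx_inj : injective idx.
Hypothesis U_universal : universal th U.

Lemma factor_through_universal (lab : baire * X -> 'I_k) :
  (forall z, exists m, [/\ lab z = flabel m, m = r \/ U (baire_proj (idx m) z.1) z.2 &
     forall q, flt q m -> ~ U (baire_proj (idx q) z.1) z.2]) ->
  forall mu, total_rep th T mu ->
  exists g : baire -> baire, continuous g /\ mu = (fun b x => lab (b, x)) \o g.
Proof.
move=> lab_min mu [_ [C [SC Ccov Clab]]].
have [g0 Hg0] := choice (fun p => U_universal.2 _ (SC p)).
pose gs n := if pselect (exists p, idx p = n) is left h then g0 (proj1_sig (cid h))
             else fun=> fun=> 0%N.
have gsE p : gs (idx p) = g0 p.
  rewrite /gs; case: pselect => [h|[]]; last by exists p.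
  by case: (cid h) => q /= /idx_inj ->.
exists (baire_tuple gs); split.
  apply: baire_tuple_continuous => n; rewrite /gs; case: pselect => [h|_].
  - by case: (Hg0 (proj1_sig (cid h))).
  - exact: cst_continuous.
apply: funext => a; apply: funext => x /=.
have UC p : U (baire_proj (idx p) (baire_tuple gs a)) x <-> C p (a, x).
  by rewrite baire_tupleK gsE; split => /(Hg0 p).2.
have [m [-> mr m_min]] := lab_min (baire_tuple gs a, x).
have notC q : flt q m -> ~ C q (a, x) by move=> qm /UC; exact: m_min.
have Cm : C m (a, x).
  case: mr => [mr|/UC //]; have : (\bigcup_p C p) (a, x) by rewrite Ccov.
  case=> p _ Cp; have [<- //|npm] := pselect (p = m).
  by case: (notC p) => //; split => //; rewrite mr.
exact: partition_label Clab Cm notC.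
Qed.
End Factorization.

Lemma principal_rep_of_universal th (U : baire -> set X) : is_ktree T -> bord_le bone th ->
  reduction_property (@Sigma0 (baire * X)%type th) -> universal th U ->
  exists nu : baire -> X -> 'I_k, principal_rep th T nu.
Proof.
move=> [r r_top] th1 red uU; have [idx idx_inj] := fnode_countable T.
have S_F p : Sigma0 th [set z : baire * X | U (baire_proj (idx p) z.1) z.2].
  exact: Sigma0_baire_proj uU.1.
have [G [lab [SG Gcov Glab lab_min]]] := tree_partition r_top idx_inj
  (Sigma0_set0 th) (Sigma0_setT th1) (@Sigma0_setI _ th) (@Sigma0_bigcup _ th) S_F red.
exists (fun b x => lab (b, x)); split; first exact: total_rep_of_partition.
by move=> mu; have := factor_through_universal r_top idx_inj uU lab_min; apply.
Qed.
End Representation.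

Theorem proposition4p13 (k : nat) (X : topologicalType) (T : kforest k) :
  (2 <= k)%N -> @second_countable X -> kolmogorov_space X -> is_ktree T ->
  (forall theta : bord, ble btwo theta ->
     exists nu : baire -> X -> 'I_k, principal_rep theta T nu) /\
  (zero_dim X -> exists nu : baire -> X -> 'I_k, principal_rep bone T nu).
Proof.
move=> _ sc _ T_tree; split.
- move=> th /bord_leP th2; have [U uU] := universal_exists sc th2.
  apply: principal_rep_of_universal T_tree _ (Sigma0_reduction th2) uU.
  exact: bord_le_trans (I : bord_le bone btwo) th2.
- move=> zd; have [e [eo eb]] := second_countable_base_seq sc.
  apply: principal_rep_of_universal T_tree (bord_le_refl _) _ (universal_base_union eo eb).
  exact: Sigma1_reduction_zero_dim sc zd.
Qed.
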